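(* Let $Z$ be a pseudo-triangulation and $S=\{(e_1,f_1),\dots,(e_k,f_k)\}$ a finite set of pairs of darts of $Z$. Then there exist a pseudo-triangulation $Z^*$ and a homomorphism $\phi^*:Z\to Z^*$ such that: $\phi^*$ respects $S$; $Z^*$ is a minimal image of $Z$ under $\phi^*$; and for every homomorphism $\phi'$ from $Z$ to a pseudo-triangulation $Z'$ that respects $S$ there is a homomorphism $\psi:Z^*\to Z'$ with $\psi\circ\phi^*=\phi'$. The pair $(Z^*,\phi^* )$ is unique up to isomorphism: if $(Z_1^*,\phi_1^* )$ and $(Z_2^*,\phi_2^* )$ both have these properties, there is an isomorphism $\chi:Z_1^*\to Z_2^*$ with $\chi\circ\phi_1^*=\phi_2^*$.
   Context: A dart representation consists of a finite set $V$ of vertices, a finite set $D$ of darts, and maps $\mathrm{head}:D\to V$, $\mathrm{rev}:D\to D$, $\mathrm{succ},\mathrm{pred}:D\to D\cup\{\mathrm{nil}\}$; a dart may be its own reverse. Write $\mathrm{tail}(e)=\mathrm{head}(\mathrm{rev}(e))$. Requirements: (M1) every vertex is the head of some dart; (M2) $\mathrm{rev}(\mathrm{rev}(e))=e$; (M3) for darts $e,f$, $e=\mathrm{pred}(f)$ iff $f=\mathrm{succ}(e)$; (M4) if $\mathrm{succ}(e)=f\ne\mathrm{nil}$ then $\mathrm{head}(e)=\mathrm{head}(f)$; (M5) if $\mathrm{succ}(e)\ne\mathrm{nil}$, then $f=\mathrm{rev}(\mathrm{succ}(e))$, $g=\mathrm{rev}(\mathrm{succ}(f))$ are defined (non-nil)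 and $e=\mathrm{rev}(\mathrm{succ}(g))$. A dart $e$ is a boundary dart if $\mathrm{succ}(e)$ or $\mathrm{pred}(e)$ is nil; its head is then a boundary vertex; other vertices are inner. The succ/pred pointers partition $D$ into doubly linked lists, cyclic or acyclic. (M6) For each vertex $v$ there is exactly one such list consisting of the darts with head $v$ (its incidence list; its length is the degree $d(v)$); it is cyclic if $v$ is inner and acyclic (nil at both ends) if $v$ is boundary. A pseudo-triangulation is a dart representation satisfying (M1)–(M6). A homomorphism $\phi:Z\to Z'$ of dart representations maps vertices to vertices and darts to darts so that $\mathrm{head}(\phi(e))=\phi(\mathrm{head}(e))$, $\mathrm{rev}(\phi(e))=\phi(\mathrm{rev}(e))$, and $\mathrm{succ}(\phi(e))=\phi(\mathrm{succ}(e))$ whenever $\mathrm{succ}(e)\ne\mathrm{nil}$, and likewise for pred. $\phi$ respects $S$ if $\phi(e_i)=\phi(f_i)$ for all $i$. $Z'$ is a minimal image of $Z$ under $\phi$ if every vertex and dart of $Z'$ is an image under $\phi$, and for every dart $e'$ of $Z'$, $\mathrm{succ}(e')\ne\mathrm{nil}$ iff some dart $e$ with $\phi(e)=e'$ has $\mathrm{succ}(e)\ne\mathrm{nil}$, and the same for pred. An isomorphism is a bijective homomorphism whose inverse is a homomorphism. *)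

From mathcomp Require Import all_boot.
Set Implicit Arguments. Unset Strict Implicit. Unset Printing Implicit Defensive.

(* A dart representation: finite vertex set, finite dart set, and maps
   head, rev, succ, pred; nil is represented by None. *)
Record dartrep := DartRep {
  vert : finType;
  dart : finType;
  head : dart -> vert;
  rev  : dart -> dart;
  succ : dart -> option dart;
  pred : dart -> option dart }.

Definition tail (Z : dartrep) (e : dart Z) : vert Z := head (rev e).

Definition boundary_dart (Z : dartrep) (e : dart Z) : Prop :=
  succ e = None \/ pred e = None.

Definition boundary_vertex (Z : dartrep) (v : vert Z) : Prop :=
  exists e : dart Z, head e = v /\ boundary_dart e.

Definition inner_vertex (Z : dartrep) (v : vert Z) : Prop := ~ boundary_vertex v.

Definition succ_rel (Z : dartrep) : rel (dart Z) := fun e f => succ e == Some f.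

Definition same_list (Z : dartrep) (e f : dart Z) : bool :=
  connect (@succ_rel Z) e f || connect (@succ_rel Z) f e.

Definition M1 (Z : dartrep) := forall v : vert Z, exists e : dart Z, head e = v.
Definition M2 (Z : dartrep) := forall e : dart Z, rev (rev e) = e.
Definition M3 (Z : dartrep) := forall e f : dart Z, pred f = Some e <-> succ e = Some f.
Definition M4 (Z : dartrep) := forall e f : dart Z, succ e = Some f -> head e = head f.
Definition M5 (Z : dartrep) := forall e s : dart Z, succ e = Some s ->
  exists s2, succ (rev s) = Some s2 /\
  exists s3, succ (rev s2) = Some s3 /\ rev s3 = e.
(* M6: for each vertex v, the darts with head v form exactly one list
   (any two of them lie on a common list, and lists are head-homogeneous by M4);
   the list is cyclic for inner v (every dart has succ and pred) and acyclic,
   with nil at both ends, for boundary v. *)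
Definition M6 (Z : dartrep) :=
  (forall e f : dart Z, head e = head f -> same_list e f) /\
  (forall v : vert Z, inner_vertex v ->
     forall e : dart Z, head e = v -> succ e <> None /\ pred e <> None) /\
  (forall v : vert Z, boundary_vertex v ->
     (exists e : dart Z, head e = v /\ succ e = None) /\
     (exists e : dart Z, head e = v /\ pred e = None)).

Definition pseudo_triangulation (Z : dartrep) : Prop :=
  [/\ M1 Z, M2 Z, M3 Z, M4 Z & M5 Z /\ M6 Z].

Record hom (Z Z' : dartrep) := Hom {
  homV : vert Z -> vert Z';
  homD : dart Z -> dart Z' }.

Definition is_hom (Z Z' : dartrep) (phi : hom Z Z') : Prop :=
  [/\ forall e, head (homD phi e) = homV phi (head e),
      forall e, rev (homD phi e) = homD phi (rev e),
      forall e f, succ e = Some f -> succ (homD phi e) = Some (homD phi f) &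
      forall e f, pred e = Some f -> pred (homD phi e) = Some (homD phi f)].

Definition respects (Z Z' : dartrep) (phi : hom Z Z') (S : seq (dart Z * dart Z)) :=
  forall p, p \in S -> homD phi p.1 = homD phi p.2.

Definition minimal_image (Z Z' : dartrep) (phi : hom Z Z') : Prop :=
  [/\ forall v' : vert Z', exists v, homV phi v = v',
      forall e' : dart Z', exists e, homD phi e = e',
      forall e' : dart Z', succ e' <> None <->
         exists e, homD phi e = e' /\ succ e <> None &
      forall e' : dart Z', pred e' <> None <->
         exists e, homD phi e = e' /\ pred e <> None].

Definition hom_comp (Z1 Z2 Z3 : dartrep) (psi : hom Z2 Z3) (phi : hom Z1 Z2) : hom Z1 Z3 :=
  Hom (fun v => homV psi (homV phi v)) (fun e => homD psi (homD phi e)).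

Definition hom_eq (Z Z' : dartrep) (phi phi' : hom Z Z') : Prop :=
  (forall v, homV phi v = homV phi' v) /\ (forall e, homD phi e = homD phi' e).

Definition hom_id (Z : dartrep) : hom Z Z := Hom id id.

Definition is_iso (Z Z' : dartrep) (chi : hom Z Z') : Prop :=
  is_hom chi /\ exists chi' : hom Z' Z, is_hom chi' /\
    hom_eq (hom_comp chi' chi) (hom_id Z) /\ hom_eq (hom_comp chi chi') (hom_id Z').

Definition universal_quotient (Z : dartrep) (S : seq (dart Z * dart Z))
    (Zs : dartrep) (phis : hom Z Zs) : Prop :=
  [/\ pseudo_triangulation Zs, is_hom phis, respects phis S, minimal_image phis &
      forall (Z' : dartrep) (phi' : hom Z Z'),
        pseudo_triangulation Z' -> is_hom phi' -> respects phi' S ->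
        exists psi : hom Zs Z', is_hom psi /\ hom_eq (hom_comp psi phis) phi'].

From Stdlib Require Import ClassicalEpsilon.
From mathcomp Require Import all_boot.
Set Implicit Arguments. Unset Strict Implicit. Unset Printing Implicit Defensive.

(* The universal quotient is Z modulo the least congruence containing S: on
   darts, the least equivalence containing S and compatible with rev, succ and
   pred; on vertices, the least equivalence identifying heads of congruent
   darts.  The kernels of a homomorphism respecting S are such congruences, so
   it factors through the quotient.  Axioms M1-M5 pass to any minimal
   homomorphic image; for M6 it suffices that darts with a common head lie on
   a common list, which survives the quotient because, succ being injective,
   the darts of a list are totally ordered by reachability.  Uniqueness is the
   usual argument for universal objects, using that minimal images are onto. *)

Local Open Scope quotient_scope.

Section PartialMaps.
Variables (T : finType) (o : T -> option T).

Definition orel : rel T := fun x y => o x == Some y.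

Lemma iter_obind_None n : iter n (obind o) None = None.
Proof. by elim: n => //= n ->. Qed.

Lemma connect_orelP x y :
  reflect (exists n, iter n (obind o) (Some x) = Some y) (connect orel x y).
Proof.
apply: (iffP connectP) => [[p xp ->] | [n]].
  elim: p x xp => [|z p IHp] x /=; first by exists 0.
  by case/andP=> /eqP oxz /IHp[n zp]; exists n.+1; rewrite iterSr /= oxz.
elim: n x => [|n IHn] x; first by case=> <-; exists [::].
rewrite iterSr /=; case oxz: (o x) => [z|]; last by rewrite iter_obind_None.
by case/IHn=> p zp ->; exists (z :: p); rewrite //= /orel oxz eqxx.
Qed.

Lemma connect_orel_total x y z : connect orel x y -> connect orel x z ->
  connect orel y z || connect orel z y.
Proof.
move=> /connect_orelP[m xy] /connect_orelP[n xz].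
wlog le_mn : y z m n xy xz / m <= n.
  by move=> wlog_le; case: (leqP m n) => [|/ltnW] le;
    [apply: wlog_le xy xz le | rewrite orbC; apply: wlog_le xz xy le].
by apply/orP; left; apply/connect_orelP; exists (n - m); rewrite -xy -iterD subnK.
Qed.

End PartialMaps.

(* An injection of a finite set into itself is onto, so the backward chain of
   [p] through the class of [e] must stop somewhere. *)
Lemma exists_unmatched_end (T : finType) (X : eqType) (h : T -> X)
    (s p : T -> option T) :
  (forall x y, p y = Some x <-> s x = Some y) ->
  (forall x y, s x = Some y -> h x = h y) ->
  forall e, s e = None -> exists2 y, h y = h e & p y = None.
Proof.
move=> ps hs e se; pose A := [set y | h y == h e].
have [y /andP[/[!inE]/eqP hy /eqP py] | /= p_def] :=
  pickP [pred y | (y \in A) && (p y == None)]; first by exists y.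
have pA y : y \in A -> exists2 x, p y = Some x & x \in A.
  move=> Ay; case py: (p y) (p_def y) => [x|] /=; last by rewrite Ay py.
  by move=> _; exists x => //; move: Ay; rewrite !inE (hs x y) //; apply/ps.
pose f y := odflt y (p y).
have f_inj : {in A &, injective f}.
  move=> y1 y2 /pA[x1 py1 _] /pA[x2 py2 _]; rewrite /f py1 py2 /= => x12.
  by move: py1 py2; rewrite x12 => /ps s1 /ps; rewrite s1 => -[].
have fA : f @: A = A.
  apply/eqP; rewrite eqEcard card_in_imset // leqnn andbT.
  by apply/subsetP=> _ /imsetP[y /pA[x py xA] ->]; rewrite /f py.
have : e \in f @: A by rewrite fA inE.
case/imsetP=> y /pA[x py _]; rewrite /f py /= => ex.
by move: py; rewrite -ex => /ps; rewrite se.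
Qed.

Lemma connect_pred (W : dartrep) : M3 W ->
  forall e f : dart W, connect (orel (@pred W)) e f = connect (@succ_rel W) f e.
Proof.
move=> H3 e f; rewrite -[RHS](connect_rev (@succ_rel W) e f).
by apply: eq_connect => x y /=; apply/eqP/eqP => /H3.
Qed.

Lemma same_list_sym (W : dartrep) (a b : dart W) : same_list a b = same_list b a.
Proof. exact: orbC. Qed.

Lemma same_list_trans (W : dartrep) : M3 W ->
  forall a b c : dart W, same_list a b -> same_list b c -> same_list a c.
Proof.
move=> H3 a b c; rewrite /same_list => /orP[ab|ba] /orP[bc|cb].
- by rewrite (connect_trans ab bc).
- rewrite -!(connect_pred H3) in ab cb *; rewrite orbC.
  exact: connect_orel_total ab cb.
- exact: connect_orel_total ba bc.
- by rewrite (connect_trans cb ba) orbT.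
Qed.

Lemma same_list_map (W W' : dartrep) (c : dart W -> dart W') :
  (forall e f, succ e = Some f -> succ (c e) = Some (c f)) ->
  forall e f, same_list e f -> same_list (c e) (c f).
Proof.
move=> c_succ.
have c_connect x y : connect (@succ_rel W) x y -> connect (@succ_rel W') (c x) (c y).
  case/connectP=> p xp ->; elim: p x xp => [|z p IHp] x /=; first by rewrite connect0.
  case/andP=> /eqP/c_succ cxz /IHp; apply: connect_trans.
  by apply: connect1; rewrite /succ_rel cxz.
by move=> e f /orP[ef|fe]; apply/orP; [left|right]; apply: c_connect.
Qed.

(* An inner vertex has no boundary dart by definition, and by finiteness a
   list ending in nil on one side also ends in nil on the other. *)
Lemma M6_from_same_list (W : dartrep) : M3 W -> M4 W ->
  (forall e f : dart W, head e = head f -> same_list e f) -> M6 W.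
Proof.
move=> H3 H4 same_head; split=> //; split.
  by move=> v inner_v e ev; split=> bnd; apply: inner_v; exists e;
    split=> //; [left|right].
have H3r (x y : dart W) : succ y = Some x <-> pred x = Some y.
  by split=> /H3.
have H4r (x y : dart W) : pred x = Some y -> head x = head y.
  by move/H3/H4.
move=> v [e [<- [se|pe]]]; split; try by exists e.
  by have [y hy py] := exists_unmatched_end H3 H4 se; exists y.
by have [y hy sy] := exists_unmatched_end H3r H4r pe; exists y.
Qed.

Section MinimalImage.
Variables (Z Z' : dartrep) (phi : hom Z Z').
Hypotheses (phi_hom : is_hom phi) (phi_min : minimal_image phi).

Lemma minimal_image_succ (e' f' : dart Z') : succ e' = Some f' ->
  exists e f, [/\ homD phi e = e', succ e = Some f & homD phi f = f'].
Proof.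
case: phi_hom phi_min => _ _ phi_succ _ [_ _ min_succ _] se'.
have [|e [ee' se]] := (min_succ e').1; first by rewrite se'.
case sef: (succ e) se => [f|] // _; exists e, f; split=> //.
by move: se'; rewrite -ee' (phi_succ _ _ sef) => -[].
Qed.

Lemma minimal_image_M1 : M1 Z -> M1 Z'.
Proof.
case: phi_hom phi_min => phi_head _ _ _ [surjV _ _ _] H1 v'.
have [v <-] := surjV v'; have [e <-] := H1 v.
by exists (homD phi e).
Qed.

Lemma minimal_image_M2 : M2 Z -> M2 Z'.
Proof.
case: phi_hom phi_min => _ phi_rev _ _ [_ surjD _ _] H2 e'.
by have [e <-] := surjD e'; rewrite !phi_rev H2.
Qed.

Lemma minimal_image_M3 : M3 Z -> M3 Z'.
Proof.
case: phi_hom phi_min => _ _ phi_succ phi_pred [_ _ min_succ min_pred] H3 e' f'.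
split=> [pf' | /minimal_image_succ[e [f [<- /H3 pf <-]]]]; last exact: phi_pred.
have [|f [ff' pf]] := (min_pred f').1; first by rewrite pf'.
case pfe: (pred f) pf => [e|] // _.
by move: pf'; rewrite -ff' (phi_pred _ _ pfe) => -[<-]; apply/phi_succ/H3.
Qed.

Lemma minimal_image_M4 : M4 Z -> M4 Z'.
Proof.
case: phi_hom => phi_head _ _ _ H4 e' f' /minimal_image_succ[e [f [<- sef <-]]].
by rewrite !phi_head (H4 _ _ sef).
Qed.

Lemma minimal_image_M5 : M5 Z -> M5 Z'.
Proof.
case: phi_hom => _ phi_rev phi_succ _ H5 e' s' /minimal_image_succ[e [s [<- ses <-]]].
have [s2 [s2_def [s3 [s3_def <-]]]] := H5 _ _ ses.
exists (homD phi s2); split; first by rewrite phi_rev; apply: phi_succ.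
exists (homD phi s3); split; first by rewrite phi_rev; apply: phi_succ.
by rewrite phi_rev.
Qed.

End MinimalImage.

Section FinQuotient.
Variables (T : finType) (e : equiv_rel T).

Definition quotient : finType := quot_type {eq_quot e}.

Definition qclass (x : T) : quotient := \pi_{eq_quot e} x.

Lemma qclassP x y : reflect (qclass x = qclass y) (e x y).
Proof. exact: eqmodP. Qed.

Definition qrepr (q : quotient) : T := repr q.

Lemma qclassK : cancel qrepr qclass.
Proof. exact: reprK. Qed.

Lemma qclass_repr x : e x (qrepr (qclass x)).
Proof. by apply/qclassP; rewrite qclassK. Qed.

Definition compatible (o : T -> option T) :=
  forall x y a b, e x y -> o x = Some a -> o y = Some b -> e a b.

(* The lifted map is defined on a class as soon as it is defined on one of its
   members; a fixed representative could miss it. *)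
Definition qlift (o : T -> option T) (q : quotient) : option quotient :=
  if [pick x | (qclass x == q) && (o x != None)] is Some x
  then omap qclass (o x) else None.

Lemma qlift_class o x a : compatible o -> o x = Some a ->
  qlift o (qclass x) = Some (qclass a).
Proof.
move=> o_compat oxa; rewrite /qlift; case: pickP => [y /andP[/eqP yx] | /(_ x)].
  case oyb: (o y) => [b|] // _; congr Some; apply/qclassP.
  by apply: o_compat oyb oxa; apply/qclassP.
by rewrite /= eqxx oxa.
Qed.

Lemma qlift_SomeP o q z : qlift o q = Some z ->
  exists x a, [/\ qclass x = q, o x = Some a & qclass a = z].
Proof.
rewrite /qlift; case: pickP => [x /andP[/eqP xq _] | //].
by case oxa: (o x) => [a|] //= [<-]; exists x, a.
Qed.

Lemma qlift_defined o q : compatible o ->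
  qlift o q <> None <-> exists x, qclass x = q /\ o x <> None.
Proof.
move=> o_compat; split.
  case oq: (qlift o q) => [z|] // _.
  by have [x [a [xq oxa _]]] := qlift_SomeP oq; exists x; rewrite oxa.
by case=> x [<-]; case oxa: (o x) => [a|] // _; rewrite (qlift_class o_compat oxa).
Qed.

End FinQuotient.

Arguments qclass {T} e x.
Arguments qrepr {T e} q.
Arguments qlift {T} e o q.

Section QuotientRep.
Variables (Z : dartrep) (eV : equiv_rel (vert Z)) (eD : equiv_rel (dart Z)).

Definition quotient_rep : dartrep :=
  @DartRep (quotient eV) (quotient eD)
    (fun q => qclass eV (head (qrepr q))) (fun q => qclass eD (rev (qrepr q)))
    (qlift eD (@succ Z)) (qlift eD (@pred Z)).

Definition quotient_map : hom Z quotient_rep :=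
  @Hom Z quotient_rep (qclass eV) (qclass eD).

Hypotheses (eD_head : forall e f, eD e f -> eV (head e) (head f))
  (eD_rev : forall e f, eD e f -> eD (rev e) (rev f))
  (eD_succ : compatible eD (@succ Z)) (eD_pred : compatible eD (@pred Z)).

Lemma quotient_map_hom : is_hom quotient_map.
Proof.
split=> /= [e | e | e f | e f]; try exact: qlift_class.
- by apply/qclassP/eD_head; rewrite equiv_sym qclass_repr.
- by apply/qclassP/eD_rev; rewrite equiv_sym qclass_repr.
Qed.

Lemma quotient_map_minimal : minimal_image quotient_map.
Proof.
split=> [v | e | e | e] /=; try exact: qlift_defined.
- by exists (qrepr v); rewrite qclassK.
- by exists (qrepr e); rewrite qclassK.
Qed.

Lemma quotient_map_factor (Z' : dartrep) (phi : hom Z Z') : is_hom phi ->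
  (forall v w, eV v w -> homV phi v = homV phi w) ->
  (forall e f, eD e f -> homD phi e = homD phi f) ->
  exists psi : hom quotient_rep Z', is_hom psi /\ hom_eq (hom_comp psi quotient_map) phi.
Proof.
move=> [phi_head phi_rev phi_succ phi_pred] kerV kerD.
have reprV v : homV phi (qrepr (qclass eV v)) = homV phi v.
  by apply/esym/kerV/qclass_repr.
have reprD e : homD phi (qrepr (qclass eD e)) = homD phi e.
  by apply/esym/kerD/qclass_repr.
exists (@Hom quotient_rep Z' (fun v => homV phi (qrepr v)) (fun e => homD phi (qrepr e))).
split; last by split=> /=.
split=> /= [q | q | q z | q z].
- by rewrite phi_head reprV.
- by rewrite phi_rev reprD.
- by case/qlift_SomeP=> e [a [<- sea <-]]; rewrite !reprD; apply: phi_succ.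
- by case/qlift_SomeP=> e [a [<- pea <-]]; rewrite !reprD; apply: phi_pred.
Qed.

End QuotientRep.

Definition asbool (P : Prop) : bool :=
  if excluded_middle_informative P then true else false.

Lemma asboolP (P : Prop) : reflect P (asbool P).
Proof. by rewrite /asbool; case: excluded_middle_informative => p; constructor. Qed.

Definition equiv_rel_of (T : Type) (r : rel T) (r_refl : forall x, r x x)
    (r_sym : forall x y, r x y -> r y x)
    (r_trans : forall x y z, r x y -> r y z -> r x z) : equiv_rel T :=
  EquivRel r r_refl (fun x y => sameP idP (iffP idP (@r_sym y x) (@r_sym x y)))
    (fun y x z => @r_trans x y z).

Section Congruence.
Variables (Z : dartrep) (S : seq (dart Z * dart Z)).

Record dart_congruence (R : dart Z -> dart Z -> Prop) : Prop := DartCongruence {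
  dcongr_refl : forall e, R e e;
  dcongr_sym : forall e f, R e f -> R f e;
  dcongr_trans : forall e f g, R e f -> R f g -> R e g;
  dcongr_pairs : forall p, p \in S -> R p.1 p.2;
  dcongr_rev : forall e f, R e f -> R (rev e) (rev f);
  dcongr_succ : forall e f a b, R e f -> succ e = Some a -> succ f = Some b -> R a b;
  dcongr_pred : forall e f a b, R e f -> pred e = Some a -> pred f = Some b -> R a b }.

Definition dart_closure : rel (dart Z) :=
  fun e f => asbool (forall R, dart_congruence R -> R e f).

Lemma dart_closureP e f :
  reflect (forall R, dart_congruence R -> R e f) (dart_closure e f).
Proof. exact: asboolP. Qed.

Lemma dart_closure_congruence : dart_congruence dart_closure.
Proof.
split=> [e | e f | e f g | p | e f | e f a b | e f a b].
- by apply/dart_closureP=> R [].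
- by move/dart_closureP=> ef; apply/dart_closureP=> R RC; exact (dcongr_sym RC (ef R RC)).
- move/dart_closureP=> ef /dart_closureP fg; apply/dart_closureP=> R RC.
  exact (dcongr_trans RC (ef R RC) (fg R RC)).
- by move=> pS; apply/dart_closureP=> R RC; exact (dcongr_pairs RC pS).
- by move/dart_closureP=> ef; apply/dart_closureP=> R RC; exact (dcongr_rev RC (ef R RC)).
- move/dart_closureP=> ef sa sb; apply/dart_closureP=> R RC.
  exact (dcongr_succ RC (ef R RC) sa sb).
- move/dart_closureP=> ef pa pb; apply/dart_closureP=> R RC.
  exact (dcongr_pred RC (ef R RC) pa pb).
Qed.

Definition dart_equiv : equiv_rel (dart Z) :=
  equiv_rel_of (dcongr_refl dart_closure_congruence)
    (dcongr_sym dart_closure_congruence) (dcongr_trans dart_closure_congruence).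

Record vert_congruence (R : vert Z -> vert Z -> Prop) : Prop := VertCongruence {
  vcongr_refl : forall v, R v v;
  vcongr_sym : forall v w, R v w -> R w v;
  vcongr_trans : forall u v w, R u v -> R v w -> R u w;
  vcongr_head : forall e f, dart_closure e f -> R (head e) (head f) }.

Definition vert_closure : rel (vert Z) :=
  fun v w => asbool (forall R, vert_congruence R -> R v w).

Lemma vert_closureP v w :
  reflect (forall R, vert_congruence R -> R v w) (vert_closure v w).
Proof. exact: asboolP. Qed.

Lemma vert_closure_congruence : vert_congruence vert_closure.
Proof.
split=> [v | v w | u v w | e f ef].
- by apply/vert_closureP=> R [].
- by move/vert_closureP=> vw; apply/vert_closureP=> R RC; exact (vcongr_sym RC (vw R RC)).
- move/vert_closureP=> uv /vert_closureP vw; apply/vert_closureP=> R RC.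
  exact (vcongr_trans RC (uv R RC) (vw R RC)).
- by apply/vert_closureP=> R RC; exact (vcongr_head RC ef).
Qed.

Definition vert_equiv : equiv_rel (vert Z) :=
  equiv_rel_of (vcongr_refl vert_closure_congruence)
    (vcongr_sym vert_closure_congruence) (vcongr_trans vert_closure_congruence).

Definition congruence_quotient : dartrep := quotient_rep vert_equiv dart_equiv.

Definition congruence_map : hom Z congruence_quotient :=
  quotient_map vert_equiv dart_equiv.

Lemma congruence_map_hom : is_hom congruence_map.
Proof.
have [_ _ _ _ dart_rev dart_succ dart_pred] := dart_closure_congruence.
apply: quotient_map_hom => // e f; exact: (vcongr_head vert_closure_congruence).
Qed.

Lemma congruence_map_minimal : minimal_image congruence_map.
Proof.
have [_ _ _ _ _ dart_succ dart_pred] := dart_closure_congruence.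
exact: quotient_map_minimal.
Qed.

Lemma congruence_quotient_same_list : M1 Z -> M3 Z ->
  (forall e f : dart Z, head e = head f -> same_list e f) ->
  forall x y : dart congruence_quotient, head x = head y -> same_list x y.
Proof.
move=> H1 H3 same_head.
have Q3 := minimal_image_M3 congruence_map_hom congruence_map_minimal H3.
have [_ _ map_succ _] := congruence_map_hom.
have map_same_head e f : head e = head f ->
    same_list (homD congruence_map e) (homD congruence_map f).
  by move/same_head; apply: same_list_map.
pose R v w := forall e f, head e = v -> head f = w ->
  same_list (homD congruence_map e) (homD congruence_map f).
have RC : vert_congruence R.
  split=> [v | v w Rvw | u v w Ruv Rvw | e1 f1 ef1] e f ev fw.
  - by apply: map_same_head; rewrite ev fw.
  - by rewrite same_list_sym; apply: Rvw.
  - have [g gv] := H1 v; exact (same_list_trans Q3 (Ruv e g ev gv) (Rvw g f gv fw)).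
  - have e1f1 : homD congruence_map e1 = homD congruence_map f1 by apply/qclassP.
    apply: (same_list_trans Q3 (map_same_head _ _ ev)).
    by rewrite e1f1 same_list_sym; apply: map_same_head.
move=> x y /qclassP/vert_closureP/(_ R RC)/(_ (qrepr x) (qrepr y) erefl erefl).
by rewrite /= !qclassK.
Qed.

Lemma congruence_quotient_pseudo_triangulation :
  pseudo_triangulation Z -> pseudo_triangulation congruence_quotient.
Proof.
case=> H1 H2 H3 H4 [H5 [same_head _]].
have [hom min] := (congruence_map_hom, congruence_map_minimal).
have Q3 := minimal_image_M3 hom min H3; have Q4 := minimal_image_M4 hom min H4.
split=> //; first exact: minimal_image_M1 hom min H1.
- exact: minimal_image_M2 hom min H2.
split; first exact: minimal_image_M5 hom min H5.
exact: M6_from_same_list Q3 Q4 (congruence_quotient_same_list H1 H3 same_head).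
Qed.

Lemma congruence_map_universal (Z' : dartrep) (phi : hom Z Z') :
  is_hom phi -> respects phi S ->
  exists psi : hom congruence_quotient Z',
    is_hom psi /\ hom_eq (hom_comp psi congruence_map) phi.
Proof.
move=> phi_hom phi_S; have [phi_head phi_rev phi_succ phi_pred] := phi_hom.
have kerD e f : dart_closure e f -> homD phi e = homD phi f.
  move/dart_closureP/(_ (fun e f => homD phi e = homD phi f)); apply; split.
  - by [].
  - by move=> e1 f1 ->.
  - by move=> e1 f1 g1 -> ->.
  - exact: phi_S.
  - by move=> e1 f1 ef; rewrite -!phi_rev ef.
  - by move=> e1 f1 a b ef /phi_succ sa /phi_succ; rewrite -ef sa => -[].
  - by move=> e1 f1 a b ef /phi_pred pa /phi_pred; rewrite -ef pa => -[].
have kerV v w : vert_closure v w -> homV phi v = homV phi w.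
  move/vert_closureP/(_ (fun v w => homV phi v = homV phi w)); apply; split.
  - by [].
  - by move=> v1 w1 ->.
  - by move=> u1 v1 w1 -> ->.
  - by move=> e f /kerD ef; rewrite -!phi_head ef.
exact: (@quotient_map_factor Z vert_equiv dart_equiv Z' phi phi_hom kerV kerD).
Qed.

Lemma universal_quotient_exists : pseudo_triangulation Z ->
  exists (Zs : dartrep) (phis : hom Z Zs), universal_quotient S phis.
Proof.
move=> Zpt; exists congruence_quotient, congruence_map; split.
- exact: congruence_quotient_pseudo_triangulation.
- exact: congruence_map_hom.
- by move=> p pS; apply/qclassP; apply: (dcongr_pairs dart_closure_congruence).
- exact: congruence_map_minimal.
- by move=> Z' phi _; apply: congruence_map_universal.
Qed.

End Congruence.

Lemma minimal_image_hom_eq_id (Z Z1 : dartrep) (phi : hom Z Z1) (chi : hom Z1 Z1) :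
  minimal_image phi -> hom_eq (hom_comp chi phi) phi -> hom_eq chi (hom_id Z1).
Proof.
case=> surjV surjD _ _ [chiV chiD]; split=> [v | e] /=.
- by have [u <-] := surjV v; apply: chiV.
- by have [u <-] := surjD e; apply: chiD.
Qed.

Lemma universal_quotient_unique (Z : dartrep) (S : seq (dart Z * dart Z))
    (Z1 : dartrep) (phi1 : hom Z Z1) (Z2 : dartrep) (phi2 : hom Z Z2) :
  universal_quotient S phi1 -> universal_quotient S phi2 ->
  exists chi : hom Z1 Z2, is_iso chi /\ hom_eq (hom_comp chi phi1) phi2.
Proof.
case=> pt1 hom1 resp1 min1 univ1 [pt2 hom2 resp2 min2 univ2].
have [chi [chi_hom [chiV chiD]]] := univ1 _ _ pt2 hom2 resp2.
have [chi' [chi'_hom [chi'V chi'D]]] := univ2 _ _ pt1 hom1 resp1.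
exists chi; split; last by [].
split=> //; exists chi'; split=> //; split.
- apply: minimal_image_hom_eq_id min1 _.
  by split=> x /=; [move: (chiV x) (chi'V x) | move: (chiD x) (chi'D x)] => /= -> ->.
- apply: minimal_image_hom_eq_id min2 _.
  by split=> x /=; [move: (chi'V x) (chiV x) | move: (chi'D x) (chiD x)] => /= -> ->.
Qed.

Theorem lemma9p5 (Z : dartrep) (S : seq (dart Z * dart Z)) :
  pseudo_triangulation Z ->
  (exists (Zs : dartrep) (phis : hom Z Zs), universal_quotient S phis) /\
  (forall (Z1 : dartrep) (phi1 : hom Z Z1) (Z2 : dartrep) (phi2 : hom Z Z2),
     universal_quotient S phi1 -> universal_quotient S phi2 ->
     exists chi : hom Z1 Z2, is_iso chi /\ hom_eq (hom_comp chi phi1) phi2).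
Proof.
move=> Zpt; split; first exact: universal_quotient_exists.
exact: universal_quotient_unique.
Qed.
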